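(* A regular Hausdorff space $X$ is $c$-semi-stratifiable if and only if $\mathcal{F}(X)$ is $c$-semi-stratifiable.
   Context: $\mathcal{F}(X)$ is the set of nonempty finite subsets of $X$ with the Vietoris topology (base: $\langle U_1,\dots,U_k\rangle=\{A: A\subset\bigcup_i U_i,\ A\cap U_j\neq\emptyset\ \forall j\}$, $U_i$ open in $X$). A space $Y$ is $c$-semi-stratifiable if to every compact $C\subset Y$ one can assign a sequence $\{G(n,C)\}_{n\in\omega}$ of open subsets of $Y$ such that (1) $C=\bigcap_{n\in\omega}G(n,C)$, and (2) if $C\subset F$ with $C,F$ compact, then $G(n,C)\subset G(n,F)$ for all $n$. *)

From HB Require Import structures.
From mathcomp Require Import all_boot all_order.
From mathcomp Require Import all_classical all_reals all_analysis.
Set Implicit Arguments. Unset Strict Implicit. Unset Printing Implicit Defensive.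
Local Open Scope classical_set_scope.

(* The carrier of F(X): nonempty finite subsets of X. *)
Definition finsub (X : Type) := {A : set X | finite_set A /\ A !=set0}.

HB.instance Definition _ (X : Type) := gen_eqMixin (finsub X).
HB.instance Definition _ (X : Type) := gen_choiceMixin (finsub X).

Definition vietoris_index (X : Type) := seq (set X).
HB.instance Definition _ (X : Type) := gen_eqMixin (vietoris_index X).
HB.instance Definition _ (X : Type) := gen_choiceMixin (vietoris_index X).
HB.instance Definition _ (X : Type) :=
  isPointed.Build (vietoris_index X) [::].

Definition vietoris_basic (X : Type) (s : vietoris_index X) : set (finsub X) :=
  [set A | proj1_sig A `<=` \bigcup_(U in [set U | U \in s]) U /\
           forall U, U \in s -> proj1_sig A `&` U !=set0].

Definition vietoris_dom (X : topologicalType) : set (vietoris_index X) :=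
  [set s | forall U, U \in s -> open U].

Definition vietoris (X : topologicalType) := finsub X.
HB.instance Definition _ (X : topologicalType) := Choice.on (vietoris X).
(* The Vietoris topology: the topology generated by the sets <U_1,...,U_k>
   (they form a base, so the topology they generate as a subbase is the
   same as the one they generate as a base). *)
HB.instance Definition _ (X : topologicalType) :=
  isSubBaseTopological.Build (vietoris X) (@vietoris_dom X) (@vietoris_basic X).

Definition c_semi_stratifiable (Y : topologicalType) : Prop :=
  exists G : nat -> set Y -> set Y,
    [/\ (forall n C, compact C -> open (G n C)),
        (forall C, compact C -> C = \bigcap_(n in [set: nat]) G n C) &
        (forall C F, compact C -> compact F -> C `<=` F ->
           forall n, G n C `<=` G n F)].

From mathcomp Require Import all_boot all_order finmap.
From mathcomp Require Import all_classical all_reals all_analysis.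
Set Implicit Arguments. Unset Strict Implicit. Unset Printing Implicit Defensive.
Local Open Scope classical_set_scope.

(* x |-> {x} embeds X continuously and injectively into F(X), and
   c-semi-stratifiability pulls back along such maps.  Conversely, given G for
   X, put g(n,x) = G(0,{x}) ∩ ... ∩ G(n,{x}) and let G(n,K) be the union over
   B ∈ K of the basic sets <g(n,b) : b ∈ B>.  If A ∉ K with K compact, then K
   is closed since F(X) is Hausdorff, so some finite intersection of basic
   sets <U_1,...,U_k> around A misses K.  The union of the members of K is a
   compact subset of X, and g(n,x) eventually avoids any point outside a
   compact set containing x, uniformly in x; hence for n large every B ∈ K
   with A ∈ <g(n,b) : b ∈ B> already lies in each <U_1,...,U_k>, which is
   absurd. *)

Lemma filter_forall_finite {T : choiceType} {I : Type} (F : set_system I)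
    {FF : Filter F} (A : set T) (Q : T -> I -> Prop) : finite_set A ->
  (forall a, A a -> \forall i \near F, Q a i) ->
  \forall i \near F, forall a, A a -> Q a i.
Proof.
move=> /finite_fsetP[D ->] AQ.
by apply: filterS (filter_bigI FF AQ) => i DQ a Da; exact: DQ.
Qed.

Lemma finite_tube {X : topologicalType} {I : Type} (F : set_system I)
    {FF : Filter F} (P : I -> X -> Prop) (A : set X) : finite_set A ->
  (forall x, A x -> \forall x' \near x & i \near F, P i x') ->
  exists2 W, open W /\ A `<=` W & \forall i \near F, W `<=` P i.
Proof.
move=> finA AP.
have exUE x : exists UE : set X * set I, A x ->
    [/\ open UE.1, UE.1 x, F UE.2 & forall y i, UE.1 y -> UE.2 i -> P i y].
  have [/AP[[U E] [nU FE] UEP]|nAx] := pselect (A x); last first.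
    by exists (set0, set0) => /nAx.
  move: nU; rewrite nbhsE => -[V [oV Vx] VU]; exists (V, E) => _.
  split => // y i Vy Ei.
  by apply: (UEP (y, i)); split => //; exact: VU.
have [UE UEP] := choice exUE.
exists (\bigcup_(x in A) (UE x).1).
  split; first by apply: bigcup_open => x /UEP[].
  by move=> x Ax; exists x => //; have [] := UEP x Ax.
have : \forall i \near F, forall x, A x -> (UE x).2 i.
  by apply: filter_forall_finite => // x /UEP[].
apply: filterS => i Ei y [x Ax Uy]; have [_ _ _ UEPx] := UEP x Ax.
exact: UEPx (Ei x Ax).
Qed.

Lemma hausdorff_separate_finite {X : topologicalType} (a : X) (B : set X) :
  hausdorff_space X -> finite_set B -> ~ B a ->
  exists U W : set X, [/\ open U, open W, U a, B `<=` W & U `&` W = set0].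
Proof.
rewrite open_hausdorff => hX finB Ba.
have [W [oW BW] WP] : exists2 W, open W /\ B `<=` W &
    \forall y \near a, W `<=` (fun x => y <> x).
  apply: finite_tube finB _ => b Bb.
  have /hX[[U V] /= [/set_mem Ua /set_mem Vb] [oU oV /eqP UV]] : a != b.
    by apply/eqP => ab; apply: Ba; rewrite ab.
  exists (V, U); first by split; apply: open_nbhs_nbhs.
  move=> [x y] /= [Vx Uy] yx.
  have : (U `&` V) y by split; last rewrite yx.
  by rewrite UV.
move: WP; rewrite /prop_near1 nbhsE => -[U [oU Ua] UW].
exists U, W; split => //; rewrite -subset0 => z [Uz Wz].
exact: (UW z Uz z Wz erefl).
Qed.

Section vietoris.
Variable X : topologicalType.
Implicit Types (A B : vietoris X) (s : vietoris_index X).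

Definition points A : set X := proj1_sig A.

Lemma points_inj : injective points.
Proof.
case=> a pa [b pb] /= eab; case: _ / eab in pb *.
by rewrite (Prop_irrelevance pa pb).
Qed.

Lemma finite_points A : finite_set (points A).
Proof. by case: A => ? []. Qed.

Lemma points_neq0 A : points A !=set0.
Proof. by case: A => ? []. Qed.

Lemma open_vietoris_basic s : vietoris_dom s ->
  open (vietoris_basic s : set (vietoris X)).
Proof.
move=> ds; exists [set vietoris_basic s]; last by rewrite bigcup_set1.
move=> _ ->; exists [fset s]%fset; first by move=> i; rewrite !inE => ->.
by rewrite set_fset1 bigcap_set1.
Qed.

Lemma vietoris_nbhs_basic A (O : set (vietoris X)) : nbhs A O ->
  exists2 D : {fset vietoris_index X},
    (forall s, s \in D -> vietoris_dom s /\ vietoris_basic s A) &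
    \bigcap_(s in [set` D]) vietoris_basic s `<=` O.
Proof.
rewrite nbhsE => -[U [[D0 D0fin eU] UA] UO].
move: UA; rewrite -eU => -[C D0C]; have [D DD0 eC] := D0fin _ D0C.
rewrite -eC => DA; exists D.
  by move=> s Ds; split; [have := DD0 _ Ds; rewrite inE|exact: DA].
by move=> P DP; apply: UO; rewrite -eU; exists C; rewrite // -eC.
Qed.

Lemma vietoris_basic1E (W : set X) :
  vietoris_basic [:: W] = [set A | points A `<=` W].
Proof.
apply/seteqP; split=> A.
  by move=> [AW _] x /AW[U /=]; rewrite inE => /eqP->.
move=> AW; split=> [x Ax|U]; first by exists W; [rewrite /= inE|exact: AW].
rewrite inE => /eqP->; have [x Ax] := points_neq0 A.
by exists x; split; last exact: AW.
Qed.

Lemma vietoris_basic_meetE (U : set X) :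
  vietoris_basic [:: U; setT] = [set A | points A `&` U !=set0].
Proof.
apply/seteqP; split=> A; first by move=> [_]; apply; rewrite mem_head.
move=> AU; split=> [x _|V]; first by exists setT => //=; rewrite !inE eqxx orbT.
by rewrite !inE => /orP[|] /eqP-> //; have [x Ax] := points_neq0 A; exists x.
Qed.

Lemma vietoris_hausdorff : hausdorff_space X -> hausdorff_space (vietoris X).
Proof.
move=> hX; suff sub A B : cluster (nbhs A) B -> points A `<=` points B.
  move=> A B AB; apply/points_inj/seteqP; split; first exact: sub.
  by apply: sub => P Q nP nQ; rewrite setIC; exact: AB.
move=> AB a Aa; apply: contrapT => Ba.
have [U [W [oU oW Ua BW UW]]] :=
  hausdorff_separate_finite hX (finite_points B) Ba.
have [C [[c [Cc Uc]] CW]] :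
    [set C | points C `&` U !=set0] `&` [set C | points C `<=` W] !=set0.
  rewrite -vietoris_basic_meetE -vietoris_basic1E; apply: AB.
    apply: open_nbhs_nbhs; split; last first.
      by rewrite vietoris_basic_meetE; exists a.
    apply: open_vietoris_basic => V; rewrite !inE => /orP[|] /eqP-> //.
    exact: openT.
  apply: open_nbhs_nbhs; split; last by rewrite vietoris_basic1E.
  by apply: open_vietoris_basic => V; rewrite inE => /eqP->.
have : (U `&` W) c by split; last exact: CW.
by rewrite UW.
Qed.

Lemma compact_bigcup_points (KK : set (vietoris X)) :
  compact KK -> compact (\bigcup_(B in KK) points B).
Proof.
move=> /compact_near_coveringP cKK; apply/compact_near_coveringP.
move=> I F P FF cover.
have : \forall i \near F, KK `<=` (fun B => points B `<=` P i).
  apply: (cKK I F (fun i B => points B `<=` P i)) => B KKB.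
  have [W [oW BW] WP] : exists2 W, open W /\ points B `<=` W &
      \forall i \near F, W `<=` P i.
    by apply: finite_tube (finite_points B) _ => x Bx; apply: cover; exists B.
  exists (vietoris_basic [:: W], [set i | W `<=` P i]) => [|[B' i] /= []].
    split=> //; apply: open_nbhs_nbhs; split; last by rewrite vietoris_basic1E.
    by apply: open_vietoris_basic => U; rewrite inE => /eqP->.
  by rewrite vietoris_basic1E => B'W WPi x /B'W; exact: WPi.
by apply: filterS => i KKPi x [B /KKPi]; apply.
Qed.

Definition fsub1 (x : X) : vietoris X :=
  exist _ [set x] (conj (finite_set1 x) (ex_intro [set x] x erefl)).

Lemma fsub1_inj : injective fsub1.
Proof.
by move=> x y /(congr1 points) /= xy; suff : [set y] x by []; rewrite -xy.
Qed.

Lemma continuous_fsub1 : continuous fsub1.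
Proof.
move=> x O /vietoris_nbhs_basic[D sD DO]; apply: filterS DO _ => /=.
apply: filter_forall_finite (finite_fset D) _ => s /sD[os [xs sx]].
have : \forall y \near x, forall U, [set` s] U -> U y.
  apply: filter_forall_finite (finite_seq s) _ => U sU.
  by apply: open_nbhs_nbhs; split; [exact: os|have [_ [/= -> ]] := sx U sU].
apply: filterS => y sy; split=> [_ ->|U sU].
  by have [U0 sU0 _] := xs x erefl; exists U0 => //; exact: sy.
by exists y; split=> //; exact: sy.
Qed.

End vietoris.

Lemma c_semi_stratifiable_inj (X Y : topologicalType) (f : X -> Y) :
  continuous f -> injective f -> c_semi_stratifiable Y -> c_semi_stratifiable X.
Proof.
move=> cf injf [G [oG G_bigcap G_sub]].
have cpt C : compact C -> compact (f @` C).
  by apply: continuous_compact; exact: continuous_subspaceT.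
exists (fun n C => f @^-1` G n (f @` C)); split.
- by move=> n C cC; apply: open_comp (oG n _ (cpt C cC)) => x _; exact: cf.
- move=> C cC; apply/seteqP; split=> [x Cx n _|x Gx] /=.
    have : (f @` C) (f x) by exists x.
    by rewrite {1}(G_bigcap _ (cpt C cC)); apply.
  have : (\bigcap_(n in [set: nat]) G n (f @` C)) (f x).
    by move=> n _; exact: Gx.
  by rewrite -(G_bigcap _ (cpt C cC)) => -[y Cy /injf <-].
- move=> C F cC cF CF n; apply: preimage_subset.
  by apply: G_sub; [exact: cpt|exact: cpt|exact: image_subset].
Qed.

Section vietoris_c_semi_stratifiable.
Variables (X : topologicalType) (G : nat -> set X -> set X).
Hypothesis open_G : forall n C, compact C -> open (G n C).
Hypothesis G_bigcap :
  forall C, compact C -> C = \bigcap_(n in [set: nat]) G n C.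
Hypothesis G_subset : forall C F, compact C -> compact F -> C `<=` F ->
  forall n, G n C `<=` G n F.

Definition g n (x : X) : set X := \bigcap_(m in `I_n.+1) G m [set x].

Lemma open_g n x : open (g n x).
Proof.
rewrite openE => y gy; apply: filter_forall_finite (finite_II n.+1) _ => m Im.
by apply: open_nbhs_nbhs; split; [exact/open_G/compact_set1|exact: gy].
Qed.

Lemma g_refl n x : g n x x.
Proof.
have : [set x] x by [].
by rewrite {1}(G_bigcap (@compact_set1 X x)) => + m _; apply.
Qed.

Lemma eventually_g_notin C y : compact C -> ~ C y ->
  \forall n \near \oo, forall x, C x -> ~ g n x y.
Proof.
move=> cC nCy; have [N nGNy] : exists N, ~ G N C y.
  apply: contrapT => GCy; apply: nCy; rewrite (G_bigcap cC) => n _.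
  by apply: contrapT => nGny; apply: GCy; exists n.
exists N => // n /= Nn x Cx gxy; apply: nGNy.
have xC : [set x] `<=` C by move=> _ ->.
exact: (G_subset (@compact_set1 X x) cC xC (gxy N Nn)).
Qed.

Lemma eventually_g_sub (K U : set X) a : compact K -> open U -> U a ->
  \forall n \near \oo, forall x, K x -> g n x a -> U x.
Proof.
move=> cK oU Ua.
have cKU : compact (K `&` ~` U).
  by apply: compact_closedI cK _; exact: open_closedC.
have : ~ (K `&` ~` U) a by move=> [_]; apply.
move=> /(eventually_g_notin cKU); apply: filterS => n nga x Kx gxa.
by apply: contrapT => nUx; exact: (nga x (conj Kx nUx) gxa).
Qed.

Definition g_basic n (B : vietoris X) : set (vietoris X) :=
  [set A | points A `<=` \bigcup_(b in points B) g n b /\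
           forall b, points B b -> points A `&` g n b !=set0].

Lemma g_basic_refl n B : g_basic n B B.
Proof.
by split=> [x Bx|b Bb]; [exists x|exists b; split] => //; exact: g_refl.
Qed.

Lemma open_g_basic n B : open (g_basic n B).
Proof.
have [s es] := (finite_seqP _).1 (finite_points B).
suff -> : g_basic n B = vietoris_basic (map (g n) s).
  by apply: open_vietoris_basic => U /mapP[x _ ->]; exact: open_g.
rewrite /g_basic es; apply/seteqP; split=> A [AB BA]; split.
- by move=> x /AB[b sb gbx]; exists (g n b) => //=; exact: map_f.
- by move=> U /mapP[b sb ->]; exact: BA.
- by move=> x /AB[U /mapP[b sb ->] gbx]; exists b.
- by move=> b sb; apply: BA; exact: map_f.
Qed.

Lemma eventually_g_basic_sub (K : set X) s A : compact K -> vietoris_dom s ->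
  vietoris_basic s A ->
  \forall n \near \oo, forall B, points B `<=` K -> g_basic n B A ->
    vietoris_basic s B.
Proof.
move=> cK os [As sA].
pose W := \bigcup_(U in [set U | U \in s]) U.
have oW : open W by apply: bigcup_open => U; exact: os.
have W_near : \forall n \near \oo,
    forall a, points A a -> forall x, K x -> g n x a -> W x.
  apply: filter_forall_finite (finite_points A) _ => a Aa.
  exact: eventually_g_sub cK oW (As a Aa).
have U_near : \forall n \near \oo, forall U, [set` s] U ->
    exists2 a, points A a & forall x, K x -> g n x a -> U x.
  apply: filter_forall_finite (finite_seq s) _ => U sU.
  have [a [Aa Ua]] := sA U sU.
  by apply: filterS (eventually_g_sub cK (os U sU) Ua) => n h; exists a.
apply: filterS (filterI W_near U_near) => n [Wn Un] B BK [AB BA]; split.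
- by move=> b Bb; have [a [Aa gba]] := BA b Bb; exact: Wn a Aa b (BK b Bb) gba.
- move=> U sU; have [a Aa aU] := Un U sU; have [b Bb gba] := AB a Aa.
  by exists b; split => //; exact: aU b (BK b Bb) gba.
Qed.

Definition G_vietoris n (KK : set (vietoris X)) : set (vietoris X) :=
  \bigcup_(B in KK) g_basic n B.

Lemma vietoris_c_semi_stratifiable :
  hausdorff_space X -> c_semi_stratifiable (vietoris X).
Proof.
move=> hX; exists G_vietoris; split.
- by move=> n KK _; apply: bigcup_open => B _; exact: open_g_basic.
- move=> KK cKK; apply/seteqP; split=> [B KKB n _|A KKA].
    by exists B => //; exact: g_basic_refl.
  apply: contrapT => nKKA.
  have clKK : closed KK := compact_closed (vietoris_hausdorff hX) cKK.
  have /vietoris_nbhs_basic[D sD DKK] : nbhs A (~` KK).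
    by apply: open_nbhs_nbhs; split => //; exact: closed_openC.
  have : \forall n \near \oo, forall s, s \in D -> forall B,
      points B `<=` \bigcup_(B in KK) points B -> g_basic n B A ->
      vietoris_basic s B.
    apply: filter_forall_finite (finite_fset D) _ => s /sD[os As].
    exact: eventually_g_basic_sub (compact_bigcup_points cKK) os As.
  move=> /filter_ex[n Dn]; have [B KKB ABn] := KKA n I.
  apply: (DKK B) => // s Ds; apply: Dn ABn => // x Bx; by exists B.
- by move=> KK LL _ _ KKLL n A [B /KKLL LLB gBA]; exists B.
Qed.

End vietoris_c_semi_stratifiable.

Theorem theorem4p9 (X : topologicalType) :
  regular_space X -> hausdorff_space X ->
  (c_semi_stratifiable X <-> c_semi_stratifiable (vietoris X)).
Proof.
move=> _ hX; split=> [[G [oG G_bigcap G_sub]]|].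
  exact: vietoris_c_semi_stratifiable oG G_bigcap G_sub hX.
exact: c_semi_stratifiable_inj (@continuous_fsub1 X) (@fsub1_inj X).
Qed.
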